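(* Fix non-negative integers $r$ and $m\ge1$. Let $b_j=(1^j,2^j,\dots,m^j)^T\in\mathbb{R}^m$ for $j=0,\dots,r$, and let $\tilde b_0=b_0$ and $\tilde b_j=b_j-\Pi_{j-1}b_j$ for $j\ge1$, where $\Pi_{j-1}$ is the orthogonal projection onto $\mathrm{Span}(b_0,\dots,b_{j-1})$ (Gram–Schmidt orthogonalization without normalization). Then for each $j\in\{0,\dots,r\}$ there is a constant $c_r>0$ depending only on $r$ such that $$\|\tilde b_j\|_\infty\le c_r\,m^j.$$ *)

From HB Require Import structures.
From mathcomp Require Import all_boot all_order all_algebra.
From mathcomp Require Import reals.
Set Implicit Arguments. Unset Strict Implicit. Unset Printing Implicit Defensive.
Import Order.TTheory GRing.Theory Num.Theory.
Local Open Scope ring_scope.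

Definition bvec (R : realType) (m j : nat) : 'rV[R]_m :=
  \row_(k < m) ((k.+1)%:R ^+ j).

(* matrix whose rows are b_0, ..., b_{j-1}; its row space is Span(b_0..b_{j-1}) *)
Definition bspan (R : realType) (m j : nat) : 'M[R]_(j, m) :=
  \matrix_(i < j) bvec R m i.

Definition is_orth_proj (R : realType) (n m : nat) (U : 'M[R]_(n, m))
  (v p : 'rV[R]_m) : Prop :=
  (p <= U)%MS /\ (v - p) *m U^T = 0.

Definition supnorm (R : realType) (m : nat) (x : 'rV[R]_m) : R :=
  \big[Num.max/0]_(k < m) `|x 0 k|.

From HB Require Import structures.
From mathcomp Require Import all_boot all_order all_algebra.
From mathcomp Require Import reals.
From mathcomp Require Import ring lra zify.
Import Order.TTheory GRing.Theory Num.Theory.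
Local Open Scope ring_scope.

(* The residual b_j - p is the grid vector t |-> Q(t), t = 1..m, of a polynomial
   Q of degree at most j.  Since b_j - p is orthogonal to p, its Euclidean norm
   is at most that of b_j, at most m^(j+1/2), so its l1 norm is at most m * m^j.
   On the other hand the (j+1)-st finite differences of Q vanish with every
   step, so |Q(k)| is bounded by a binomial combination of the values of |Q|
   along the progression k + l h, l = 1..j+1.  About m/(2(j+1)) steps h keep
   the progression inside the grid (going left or right of k), and for fixed l
   they visit distinct grid points; averaging over h gives
   |Q(k)| <= C_j ||Q||_1 / m. *)

Lemma size_comp_poly_leq_size {R : nzSemiRingType} (p q : {poly R}) :
  (size q <= 2)%N -> (size (p \Po q) <= size p)%N.
Proof.
move=> szq; have [->|nzp] := eqVneq p 0; first by rewrite comp_poly0 size_poly0.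
apply: leq_trans (size_comp_poly_leq _ _) _.
by move: szq; rewrite -size_poly_gt0 in nzp; nia.
Qed.

Section AlternatingBinomialSums.
Variable R : comNzRingType.

Lemma alt_binomial_sumS n (f : nat -> R) :
  \sum_(l < n.+2) (-1) ^+ l * 'C(n.+1, l)%:R * f l =
  \sum_(l < n.+1) (-1) ^+ l * 'C(n, l)%:R * (f l - f l.+1).
Proof.
rewrite big_ord_recl /=.
under eq_bigr => i _ do rewrite /bump /= binS natrD exprS.
rewrite (eq_bigr (fun i : 'I_n.+1 => (-1) ^+ i * 'C(n, i.+1)%:R * f i.+1 * (-1)
    + (- ((-1) ^+ i * 'C(n, i)%:R * f i.+1)))); last by move=> i _; ring.
rewrite big_split /=.
under [in RHS]eq_bigr => i _ do rewrite mulrBr.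
rewrite big_split /= sumrN addrA; congr (_ + _).
rewrite [in RHS]big_ord_recl /= !bin0 !expr0 !mul1r; congr (_ + _).
rewrite big_ord_recr /= bin_small // mulr0 !mul0r addr0.
by apply: eq_bigr => i _; rewrite /bump /= exprS; ring.
Qed.

Lemma alt_binomial_sum_expr n i : (i < n)%N ->
  \sum_(l < n.+1) (-1) ^+ l * 'C(n, l)%:R * (l%:R : R) ^+ i = 0.
Proof.
elim: n i => [//|n IHn] i ltin.
rewrite (alt_binomial_sumS n (fun l => (l%:R : R) ^+ i)) /=.
have diff_expr (l : nat) :
    (l%:R : R) ^+ i - l.+1%:R ^+ i = - \sum_(a < i) 'C(i, a)%:R * l%:R ^+ a.
  rewrite -addn1 natrD exprD1n big_ord_recr /= binn mulr1n.
  by under eq_bigr do rewrite -mulr_natl; ring.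
under eq_bigr => l _ do rewrite diff_expr mulrN mulr_sumr.
rewrite sumrN exchange_big /= big1 ?oppr0 // => a _.
under eq_bigr => l _ do rewrite mulrCA.
by rewrite -mulr_sumr IHn ?mulr0 //; exact: leq_trans (ltn_ord a) ltin.
Qed.

Lemma alt_binomial_sum_poly n (P : {poly R}) : (size P <= n)%N ->
  \sum_(l < n.+1) (-1) ^+ l * 'C(n, l)%:R * P.[l%:R] = 0.
Proof.
move=> szP; under eq_bigr => l _ do rewrite horner_coef mulr_sumr.
rewrite exchange_big /= big1 // => i _.
under eq_bigr => l _ do rewrite mulrCA.
rewrite -mulr_sumr alt_binomial_sum_expr ?mulr0 //.
exact: leq_trans (ltn_ord i) szP.
Qed.

Lemma alt_binomial_sum_progression n (P : {poly R}) x d : (size P <= n)%N ->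
  \sum_(l < n.+1) (-1) ^+ l * 'C(n, l)%:R * P.[x + l%:R * d] = 0.
Proof.
move=> szP; pose q := d%:P * 'X + x%:P.
have szPq : (size (P \Po q) <= n)%N.
  apply: leq_trans _ szP; apply: size_comp_poly_leq_size.
  by rewrite size_MXaddC; case: ifP => //; rewrite ltnS size_polyC leq_b1.
rewrite -[RHS](alt_binomial_sum_poly _ _ szPq); apply: eq_bigr => l _.
by rewrite horner_comp !hornerE [d * _]mulrC addrC.
Qed.

End AlternatingBinomialSums.

Lemma sum_bin_succ_leq_exp2 n : (\sum_(l < n) 'C(n, l.+1) <= 2 ^ n)%N.
Proof.
have -> : (2 ^ n = \sum_(l < n.+1) 'C(n, l))%N.
  rewrite -[in LHS](addn1 1) expnDn.
  by apply: eq_bigr => l _; rewrite !exp1n !muln1.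
by rewrite big_ord_recl leq_addl.
Qed.

Section GridEstimates.
Variable R : numDomainType.

Lemma norm_horner_le_binomial_sum n (P : {poly R}) a d : (size P <= n.+1)%N ->
  `|P.[a]| <= \sum_(l < n.+1) 'C(n.+1, l.+1)%:R * `|P.[a + l.+1%:R * d]|.
Proof.
move=> szP; have := @alt_binomial_sum_progression R n.+1 P a d szP.
rewrite big_ord_recl /= expr0 bin0 !mul1r mul0r addr0 => /eqP.
rewrite addr_eq0 => /eqP ->; rewrite normrN.
apply: le_trans (ler_norm_sum _ _ _) _; apply: ler_sum => l _.
by rewrite /bump /= add1n !normrM normrX normrN1 expr1n mul1r normr_nat.
Qed.

Lemma ler_sum_uniq_subset (I : eqType) (s s' : seq I) (F : I -> R) :
  uniq s -> uniq s' -> {subset s <= s'} -> (forall i, 0 <= F i) ->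
  \sum_(i <- s) F i <= \sum_(i <- s') F i.
Proof.
move=> us us' ss' F0.
rewrite [X in _ <= X](bigID (mem s)) /= -[X in _ <= X + _]big_filter.
have perm_s : perm_eq [seq i <- s' | i \in s] s.
  apply: uniq_perm (filter_uniq _ us') us _ => i; rewrite mem_filter.
  by apply/andP/idP => [[]//|si]; split=> //; apply: ss'.
by rewrite (perm_big _ perm_s) lerDl sumr_ge0.
Qed.

Lemma ler_sum_progression (F : nat -> R) k d H m :
  (forall t, 0 <= F t) -> (0 < d)%N -> (k + d * H < m)%N ->
  \sum_(h < H) F (k + d * h.+1)%N <= \sum_(t < m) F t.
Proof.
move=> F0 d_gt0 lt_km.
rewrite -(big_mkord xpredT (fun h => F (k + d * h.+1)%N)) -(big_mkord xpredT F).
rewrite -(big_map (fun h => k + d * h.+1)%N xpredT F).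
apply: ler_sum_uniq_subset => //.
- rewrite map_inj_uniq; first exact: iota_uniq.
  by move=> h1 h2 /addnI /eqP; rewrite eqn_pmul2l // => /eqP [].
- exact: iota_uniq.
- move=> t /mapP[h]; rewrite !mem_index_iota => /andP[_ lt_hH] ->.
  by apply: leq_ltn_trans lt_km; rewrite leq_add2l leq_mul2l lt_hH orbT.
Qed.

Lemma norm_horner_mul_le_forward n (P : {poly R}) m k H :
  (size P <= n.+1)%N -> (k + n.+1 * H < m)%N ->
  `|P.[k.+1%:R]| * H%:R <= 2 ^+ n.+1 * \sum_(t < m) `|P.[t.+1%:R]|.
Proof.
move=> szP lt_km; pose F t := `|P.[t.+1%:R]|.
have diff_bound h :
    `|P.[k.+1%:R]| <= \sum_(l < n.+1) 'C(n.+1, l.+1)%:R * F (k + l.+1 * h.+1)%N.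
  apply: le_trans (norm_horner_le_binomial_sum _ _ k.+1%:R h.+1%:R szP) _.
  by apply: ler_sum => l _; rewrite /F -addSn natrD natrM.
have progression_bound (l : 'I_n.+1) :
    \sum_(h < H) F (k + l.+1 * h.+1)%N <= \sum_(t < m) F t.
  apply: ler_sum_progression => [t | // |]; first exact: normr_ge0.
  by apply: leq_ltn_trans lt_km; rewrite leq_add2l leq_mul2r ltn_ord orbT.
rewrite mulr_natr -[in _ *+ H](card_ord H) -sumr_const.
apply: (@le_trans _ _
  (\sum_(h < H) \sum_(l < n.+1) 'C(n.+1, l.+1)%:R * F (k + l.+1 * h.+1)%N)).
  by apply: ler_sum => h _; apply: diff_bound.
rewrite exchange_big /=.
apply: (@le_trans _ _ (\sum_(l < n.+1) 'C(n.+1, l.+1)%:R * \sum_(t < m) F t)).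
  by apply: ler_sum => l _; rewrite -mulr_sumr ler_wpM2l.
rewrite -mulr_suml ler_wpM2r ?sumr_ge0 // => [t _|]; first exact: normr_ge0.
by rewrite -natr_sum -natrX ler_nat sum_bin_succ_leq_exp2.
Qed.

Lemma norm_horner_mul_le_backward n (P : {poly R}) m k H :
  (size P <= n.+1)%N -> (n.+1 * H <= k < m)%N ->
  `|P.[k.+1%:R]| * H%:R <= 2 ^+ n.+1 * \sum_(t < m) `|P.[t.+1%:R]|.
Proof.
(* Reflect the grid: P' := P(m + 1 - X) takes the values of P in reverse. *)
move=> szP /andP[le_Hk lt_km]; pose P' := P \Po (m.+1%:R%:P - 'X).
have szP' : (size P' <= n.+1)%N.
  apply: leq_trans _ szP; apply: size_comp_poly_leq_size.
  by rewrite -opprB size_polyN size_XsubC.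
have P'E t : (t <= m)%N -> P'.[t.+1%:R] = P.[(m - t)%:R].
  by move=> le_tm; rewrite horner_comp !hornerE -natrB // subSS.
have := @norm_horner_mul_le_forward n P' m (m.-1 - k) H szP'.
rewrite P'E; last by lia.
have -> : (m - (m.-1 - k) = k.+1)%N by lia.
rewrite [in X in _ -> X](reindex_inj rev_ord_inj) /=.
under [in X in _ -> X]eq_bigr => t _
  do rewrite (subnSK (ltn_ord t)) -(P'E _ (ltnW (ltn_ord t))).
by apply; lia.
Qed.

Lemma norm_horner_mul_le n (P : {poly R}) m k :
  (size P <= n.+1)%N -> (k < m)%N ->
  `|P.[k.+1%:R]| * m%:R <=
    ((2 ^ n.+1).+1 * (2 * n.+1))%:R * \sum_(t < m) `|P.[t.+1%:R]|.
Proof.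
move=> szP lt_km; set S := \sum_(t < m) _; set H := (m %/ (2 * n.+1))%N.
have le_Hm : (H * (2 * n.+1) <= m)%N by apply: leq_divM.
have HS : `|P.[k.+1%:R]| * H%:R <= 2 ^+ n.+1 * S.
  (* As 2 n.+1 H <= m, the progression fits on the right or on the left of k. *)
  have [fwd|bwd] := ltnP (k + n.+1 * H) m.
    exact: norm_horner_mul_le_forward.
  by apply: norm_horner_mul_le_backward => //; rewrite lt_km andbT; nia.
have PS : `|P.[k.+1%:R]| <= S.
  by rewrite /S (bigD1 (Ordinal lt_km)) //= lerDl sumr_ge0.
have lt_mH : (m < H.+1 * (2 * n.+1))%N by apply: ltn_ceil.
apply: (@le_trans _ _ (`|P.[k.+1%:R]| * (H.+1 * (2 * n.+1))%:R)).
  by rewrite ler_wpM2l // ler_nat ltnW.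
rewrite natrM mulrA [in leRHS]natrM [in leRHS]mulrAC ler_wpM2r //.
rewrite -(addn1 H) -(addn1 (2 ^ n.+1)) !natrD.
by rewrite mulrDr mulrDl mulr1 mul1r natrX lerD.
Qed.

End GridEstimates.

Lemma sum_sqr_le_add_orth [R : realDomainType] [m] [u w : 'rV[R]_m] :
  u *m w^T = 0 ->
  \sum_(t < m) u 0 t ^+ 2 <= \sum_(t < m) (u + w) 0 t ^+ 2.
Proof.
move=> /matrixP/(_ 0 0); rewrite !mxE => orth.
have {}orth : \sum_(t < m) u 0 t * w 0 t = 0.
  by rewrite -[RHS]orth; apply: eq_bigr => t _; rewrite mxE.
apply: (@le_trans _ _ (\sum_(t < m) (u 0 t ^+ 2 + 2 * (u 0 t * w 0 t)))).
  by rewrite big_split /= -mulr_sumr orth mulr0 addr0.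
apply: ler_sum => t _.
by rewrite mxE sqrrD mulr_natl lerDl sqr_ge0.
Qed.

Lemma sum_norm_le_of_sum_sqr_le [R : realDomainType] [m] [u : 'I_m -> R] [M] :
  0 < M ->
  \sum_(t < m) u t ^+ 2 <= m%:R * M ^+ 2 -> \sum_(t < m) `|u t| <= m%:R * M.
Proof.
move=> M_gt0 sum_sqr; rewrite -(@ler_pM2l _ (2 * M)) ?mulr_gt0 //.
have amgm t : 2 * M * `|u t| <= u t ^+ 2 + M ^+ 2.
  by have := sqr_ge0 (`|u t| - M); rewrite sqrrB real_normK ?num_real //; lra.
rewrite mulr_sumr; apply: le_trans (ler_sum _ (fun t _ => amgm t)) _.
by rewrite big_split /= sumr_const card_ord -[M ^+ 2 *+ m]mulr_natl; lra.
Qed.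

Lemma is_orth_proj_residual_orth [R : realType] [n m] [U : 'M[R]_(n, m)] [v p] :
  is_orth_proj U v p -> (v - p) *m p^T = 0.
Proof. by case=> /submxP[D ->] orth; rewrite trmx_mul mulmxA orth mul0mx. Qed.

Lemma bvec_sub_horner [R : realType] [m j] [p : 'rV[R]_m] :
  (p <= bspan R m j)%MS ->
  exists2 Q : {poly R}, (size Q <= j.+1)%N &
    forall t : 'I_m, (bvec R m j - p) 0 t = Q.[t.+1%:R].
Proof.
case/submxP => D ->; exists ('X^j - \sum_(i < j) D 0 i *: 'X^i).
  rewrite (leq_trans (size_polyD _ _)) // size_polyN size_polyXn geq_max leqnn.
  apply: leq_trans (size_sum _ _ _) _; apply/bigmax_leqP => i _.
  by rewrite (leq_trans (size_scale_leq _ _)) // size_polyXn ltnS ltnW.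
move=> t; rewrite !mxE hornerD hornerN hornerXn horner_sum; congr (_ - _).
by apply: eq_bigr => i _; rewrite hornerZ hornerXn !mxE.
Qed.

Theorem lemma10 (R : realType) (r : nat) :
  exists c : R, 0 < c /\
    forall (m : nat), (0 < m)%N ->
    forall (j : nat), (j <= r)%N ->
    forall p : 'rV[R]_m, is_orth_proj (bspan R m j) (bvec R m j) p ->
      supnorm (bvec R m j - p) <= c * (m%:R) ^+ j.
Proof.
pose c n := ((2 ^ n.+1).+1 * (2 * n.+1))%N.
exists (c r)%:R; split; first by rewrite ltr0n muln_gt0.
move=> m m_gt0 j le_jr p proj_p.
have [Q szQ residualE] := bvec_sub_horner proj_p.1.
pose M : R := m%:R ^+ j.
have M_gt0 : 0 < M by rewrite exprn_gt0 // ltr0n.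
have sum_sqr : \sum_(t < m) Q.[t.+1%:R] ^+ 2 <= m%:R * M ^+ 2.
  under eq_bigr do rewrite -residualE.
  apply: le_trans (sum_sqr_le_add_orth (is_orth_proj_residual_orth proj_p)) _.
  rewrite subrK mulr_natl -[m in _ *+ m](card_ord m) -sumr_const.
  apply: ler_sum => t _.
  by rewrite mxE -!exprM lerXn2r ?nnegrE ?ler0n // ler_nat.
have sum_norm := sum_norm_le_of_sum_sqr_le M_gt0 sum_sqr.
rewrite /supnorm; apply: bigmax_le => [|k _]; first by rewrite mulr_ge0 ?ltW.
rewrite residualE -(@ler_pM2r _ m%:R) ?ltr0n // mulrAC -mulrA.
apply: le_trans (@norm_horner_mul_le R j Q m k szQ (ltn_ord k)) _.
apply: le_trans (ler_wpM2l (ler0n _ _) sum_norm) _.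
have le_c : (c j <= c r)%N by rewrite leq_mul ?leq_mul2l ?ltnS ?leq_pexp2l.
by rewrite ler_wpM2r ?ler_nat // mulr_ge0 ?ler0n ?exprn_ge0.
Qed.
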